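(* Let $\mathbf{o}_1,\dots,\mathbf{o}_Q\in\mathbb{R}^2$ be fixed, $\mathbf{x},\mathbf{v}\in\mathbb{R}^2$ with $\mathbf{v}\neq\mathbf{0}$, and suppose $\mathbf{x}+t\mathbf{v}\neq\mathbf{o}_q$ for all $t\ge1$ and all $q$. Let $\bm{l}_q=\mathbf{x}-\mathbf{o}_q$, $\mathbf{d}_{t,q}=\bm{l}_q+t\mathbf{v}$, $d_{t,q}=\|\mathbf{d}_{t,q}\|$, $s_{T,q}^{(n)}=\sum_{t=1}^T t^n/d_{t,q}^4$, $\mathbf{P}_v^\perp=\mathbf{I}-\mathbf{v}\mathbf{v}^{\mathrm T}/\|\mathbf{v}\|^2$, and $$\mathbf{A}_{T,v}=\sum_{q=1}^Q\Big[s_{T,q}^{(2)}(\bm{l}_q^{\mathrm T}\bm{l}_q\mathbf{I}-\bm{l}_q\bm{l}_q^{\mathrm T})+s_{T,q}^{(3)}(2\mathbf{v}^{\mathrm T}\bm{l}_q\mathbf{I}-\bm{l}_q\mathbf{v}^{\mathrm T}-\mathbf{v}\bm{l}_q^{\mathrm T})+s_{T,q}^{(4)}(\|\mathbf{v}\|^2\mathbf{I}-\mathbf{v}\mathbf{v}^{\mathrm T})\Big].$$ Then, as $T\to\infty$, $\lambda_{\min}(\mathbf{A}_{T,v})-\sum_{q=1}^Q s_{T,q}^{(2)}\|\mathbf{P}_v^\perp\bm{l}_q\|^2\to0$ and $\lambda_{\max}(\mathbf{A}_{T,v})\big/\big(\sum_{q=1}^Q s_{T,q}^{(4)}\|\mathbf{v}\|^2\big)\to1$.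 *)

From HB Require Import structures.
From mathcomp Require Import all_boot all_order all_algebra.
From mathcomp Require Import all_classical all_reals all_analysis.
Set Implicit Arguments. Unset Strict Implicit. Unset Printing Implicit Defensive.
Import Order.TTheory GRing.Theory Num.Theory numFieldNormedType.Exports.
Local Open Scope ring_scope.
Local Open Scope classical_set_scope.

Definition dotv (R : realType) (u w : 'cV[R]_2) : R := (u^T *m w) 0 0.
Definition normv (R : realType) (u : 'cV[R]_2) : R := Num.sqrt (dotv u u).

Definition lambda_min (R : realType) (A : 'M[R]_2) : R :=
  inf [set a : R | eigenvalue A a].
Definition lambda_max (R : realType) (A : 'M[R]_2) : R :=
  sup [set a : R | eigenvalue A a].

Definition lvec (R : realType) (x o : 'cV[R]_2) : 'cV[R]_2 := x - o.
Definition dist_tq (R : realType) (x v o : 'cV[R]_2) (t : nat) : R :=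
  normv (lvec x o + t%:R *: v).
Definition sTq (R : realType) (x v o : 'cV[R]_2) (n T : nat) : R :=
  \sum_(1 <= t < T.+1) (t%:R ^+ n / dist_tq x v o t ^+ 4).

Definition Pperp (R : realType) (v : 'cV[R]_2) : 'M[R]_2 :=
  1%:M - (normv v ^+ 2)^-1 *: (v *m v^T).

Definition AT (R : realType) (Q : nat) (o : 'I_Q -> 'cV[R]_2)
  (x v : 'cV[R]_2) (T : nat) : 'M[R]_2 :=
  \sum_(q < Q)
    let l := lvec x (o q) in
    (sTq x v (o q) 2 T *: ((dotv l l)%:M - l *m l^T)
     + sTq x v (o q) 3 T *: ((2 * dotv v l)%:M - l *m v^T - v *m l^T)
     + sTq x v (o q) 4 T *: ((normv v ^+ 2)%:M - v *m v^T)).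

From HB Require Import structures.
From mathcomp Require Import all_boot all_order all_algebra.
From mathcomp Require Import all_classical all_reals all_analysis.
From mathcomp Require Import ring lra.
Import Order.TTheory GRing.Theory Num.Theory numFieldNormedType.Exports.

(* A symmetric 2x2 matrix A has eigenvalues mid A -/+ rad A, which in the orthogonal
   basis (v, perp v) read (p + r -/+ sqrt ((r - p)^2 + 4 b^2)) / (2 |v|^2), where
   p = v^T A v, r = (perp v)^T A (perp v) and b = v^T A (perp v).  For A = A_{T,v} only
   the s^(2) terms survive in p = |v|^2 sum_q s^(2) |P_v^perp l_q|^2, while
   r = |v|^4 sum_q s^(4) + E with E and b combinations of s^(2) and s^(3).
   As d_{t,q} grows linearly in t, t^n / d_{t,q}^4 = O(1/t) for n <= 3, so by Cesaro
   s^(2) and s^(3) are o(sqrt T), whereas sum_q s^(4) >= c T.  Hence r - p >= c' T and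
   sqrt ((r - p)^2 + 4 b^2) - (r - p) <= 2 b^2 / (r - p) = o(1), which is the first
   limit; the second follows from r <= |v|^2 lambda_max <= r + |b| and E, b = o(T). *)

Set Implicit Arguments.
Unset Strict Implicit.
Unset Printing Implicit Defensive.

Local Open Scope ring_scope.
Local Open Scope classical_set_scope.

Lemma big_ord2 (V : nmodType) (f : 'I_2 -> V) : \sum_(i < 2) f i = f 0 + f 1.
Proof. by rewrite big_ord_recl big_ord1; congr (_ + f _); apply: val_inj. Qed.

Lemma ord2_cases (i : 'I_2) : i = 0 \/ i = 1.
Proof. by case: i => [[|[|//]] ?]; [left|right]; apply: val_inj. Qed.

Section Mx2.
Variable F : fieldType.

Lemma det_mx2 (A : 'M[F]_2) : \det A = A 0 0 * A 1 1 - A 0 1 * A 1 0.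
Proof.
rewrite (expand_det_row _ 0) !big_ord_recl big_ord0 /cofactor !det_mx11 !mxE /=.
rewrite addr0 add0n expr0 mul1r /bump /= addn0 expr1 mulN1r mulrN.
by congr (_ * A _ _ - A _ _ * A _ _); apply: val_inj.
Qed.

Lemma eigenvalue_det n (A : 'M[F]_n) a : eigenvalue A a = (\det (a%:M - A) == 0).
Proof.
apply/eigenvalueP/det0P => [[u uA u0] | [u u0 uA]]; exists u => //.
  by rewrite mulmxBr uA mul_mx_scalar subrr.
by apply/eqP; rewrite -mul_mx_scalar eq_sym -subr_eq0 -mulmxBr uA.
Qed.

Lemma eigenvalue_mx2 (A : 'M[F]_2) a :
  eigenvalue A a = ((A 0 0 - a) * (A 1 1 - a) - A 0 1 * A 1 0 == 0).
Proof.
rewrite eigenvalue_det det_mx2 !mxE /= mulr1n !mulr0n !sub0r.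
by congr (_ == 0); ring.
Qed.

End Mx2.

Section PlaneVectors.
Variable R : realType.
Implicit Types (A B : 'M[R]_2) (u v w y z : 'cV[R]_2).

Lemma dotvE u w : dotv u w = u 0 0 * w 0 0 + u 1 0 * w 1 0.
Proof. by rewrite /dotv !mxE big_ord2 !mxE. Qed.

Lemma normv_sqr u : normv u ^+ 2 = dotv u u.
Proof. by rewrite sqr_sqrtr // dotvE addr_ge0 // -expr2 sqr_ge0. Qed.

Lemma normv_sqr_gt0 [u] : u != 0 -> 0 < normv u ^+ 2.
Proof.
move=> u0; rewrite normv_sqr dotvE -!expr2 lt_def addr_ge0 ?sqr_ge0 // andbT.
rewrite paddr_eq0 ?sqr_ge0 // !sqrf_eq0; apply: contra u0 => /andP[/eqP u00 /eqP u10].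
by apply/eqP/matrixP => i j; rewrite (ord1 j) mxE; case: (ord2_cases i) => ->.
Qed.

Definition perp u : 'cV[R]_2 := \col_i (if i == 0 then - u 1 0 else u 0 0).

Lemma normv_Pperp_sqr v u : v != 0 ->
  normv (Pperp v *m u) ^+ 2 = dotv u (perp v) ^+ 2 / normv v ^+ 2.
Proof.
move=> /normv_sqr_gt0; rewrite normv_sqr dotvE => /lt0r_neq0 v2_neq0.
rewrite /Pperp !normv_sqr !dotvE !mxE !big_ord2 !mxE !big_ord1 !mxE /=.
by field.
Qed.

Definition qform A u w := dotv u (A *m w).

Lemma qformE A u w : qform A u w =
  u 0 0 * (A 0 0 * w 0 0 + A 0 1 * w 1 0) + u 1 0 * (A 1 0 * w 0 0 + A 1 1 * w 1 0).
Proof. by rewrite /qform dotvE !mxE !big_ord2. Qed.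

Lemma qformD A B y z : qform (A + B) y z = qform A y z + qform B y z.
Proof. by rewrite /qform /dotv mulmxDl mulmxDr mxE. Qed.

Lemma qformN A y z : qform (- A) y z = - qform A y z.
Proof. by rewrite /qform /dotv mulNmx mulmxN mxE. Qed.

Lemma qformZ (a : R) A y z : qform (a *: A) y z = a * qform A y z.
Proof. by rewrite /qform /dotv -scalemxAl -scalemxAr mxE. Qed.

Lemma qform_sum (I : finType) (F : I -> 'M[R]_2) y z :
  qform (\sum_i F i) y z = \sum_i qform (F i) y z.
Proof.
apply: (big_morph (fun A => qform A y z) (fun A B => qformD A B y z)).
by rewrite /qform /dotv mul0mx mulmx0 mxE.
Qed.

Lemma qform_scalar (a : R) y z : qform a%:M y z = a * dotv y z.
Proof. by rewrite /qform mul_scalar_mx /dotv -scalemxAr mxE. Qed.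

Lemma qform_outer u w y z : qform (u *m w^T) y z = dotv y u * dotv w z.
Proof. by rewrite /qform /dotv !mulmxA -mulmxA mxE big_ord1. Qed.

End PlaneVectors.

Section SymmetricMx2.
Variable R : realType.
Implicit Types (A : 'M[R]_2) (a : R).

Definition mx2_mid A := (A 0 0 + A 1 1) / 2.
Definition mx2_rad A := Num.sqrt (((A 0 0 - A 1 1) / 2) ^+ 2 + A 0 1 ^+ 2).

Lemma sym_mx2E [A] : A^T = A -> A 1 0 = A 0 1.
Proof. by move=> /matrixP/(_ 0 1); rewrite mxE. Qed.

Lemma eigenvalue_sym_mx2 A a : A^T = A ->
  eigenvalue A a = (a == mx2_mid A - mx2_rad A) || (a == mx2_mid A + mx2_rad A).
Proof.
move=> /sym_mx2E symA; rewrite eigenvalue_mx2 symA.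
have rad_ge0 : 0 <= ((A 0 0 - A 1 1) / 2) ^+ 2 + A 0 1 ^+ 2.
  by rewrite addr_ge0 ?sqr_ge0.
have -> : (A 0 0 - a) * (A 1 1 - a) - A 0 1 * A 0 1 =
    (a - mx2_mid A) ^+ 2 - mx2_rad A ^+ 2.
  by rewrite sqr_sqrtr // /mx2_mid; field.
by rewrite subr_eq0 eqf_sqr !subr_eq orbC [- _ + _]addrC [_ + mx2_mid _]addrC.
Qed.

Lemma lambda_sym_mx2 A : A^T = A ->
  lambda_min A = mx2_mid A - mx2_rad A /\ lambda_max A = mx2_mid A + mx2_rad A.
Proof.
move=> symA; set lo := _ - _; set hi := _ + _.
have spec b : [set a | eigenvalue A a] b <-> b = lo \/ b = hi.
  rewrite /= eigenvalue_sym_mx2 //.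
  by split => [/orP[]/eqP->|[]->]; [left|right|rewrite /lo eqxx|rewrite /hi eqxx orbT].
have rad_ge0 : 0 <= mx2_rad A := sqrtr_ge0 _.
have lo_bound : lbound [set a | eigenvalue A a] lo.
  by move=> b /spec[]->; rewrite /lo /hi; lra.
have hi_bound : ubound [set a | eigenvalue A a] hi.
  by move=> b /spec[]->; rewrite /lo /hi; lra.
split; apply/le_anti/andP; split.
- by apply: ge_inf; [exists lo | apply/spec; left].
- by apply: lb_le_inf => //; exists lo; apply/spec; left.
- by apply: ge_sup => //; exists hi; apply/spec; right.
- by apply: ub_le_sup; [exists hi | apply/spec; right].
Qed.

Section Basis.
Variables (A : 'M[R]_2) (c : 'cV[R]_2).
Hypotheses (symA : A^T = A) (c_neq0 : c != 0).

Lemma mx2_mid_basis : mx2_mid A =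
  (qform A c c + qform A (perp c) (perp c)) / (2 * normv c ^+ 2).
Proof.
have := normv_sqr_gt0 c_neq0; rewrite normv_sqr dotvE => /lt0r_neq0 c2_neq0.
by rewrite /mx2_mid !qformE !mxE (sym_mx2E symA) /=; field.
Qed.

Lemma mx2_rad_basis : mx2_rad A = Num.sqrt
    ((qform A (perp c) (perp c) - qform A c c) ^+ 2 + 4 * qform A c (perp c) ^+ 2)
  / (2 * normv c ^+ 2).
Proof.
have c2_gt0 := normv_sqr_gt0 c_neq0.
set D := (_ - _) ^+ 2 + _.
have D_ge0 : 0 <= D by rewrite /D addr_ge0 ?sqr_ge0 // mulr_ge0 ?sqr_ge0.
rewrite /mx2_rad.
have -> : ((A 0 0 - A 1 1) / 2) ^+ 2 + A 0 1 ^+ 2 = D / (2 * normv c ^+ 2) ^+ 2.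
  move: c2_gt0; rewrite /D normv_sqr !qformE !mxE (sym_mx2E symA) dotvE /= => c2_gt0.
  by field; exact: lt0r_neq0.
by rewrite sqrtrM // sqrtrV ?sqr_ge0 // sqrtr_sqr gtr0_norm // mulr_gt0.
Qed.

End Basis.

End SymmetricMx2.

Section SqrtBounds.
Variable R : rcfType.
Implicit Types y r : R.

Let four_sqr_ge0 r : 0 <= 4 * r ^+ 2.
Proof. by rewrite mulr_ge0 // sqr_ge0. Qed.

Lemma sqrt_sqr_addr_ge y r : 0 <= y -> y <= Num.sqrt (y ^+ 2 + 4 * r ^+ 2).
Proof.
move=> y_ge0; rewrite -[X in X <= _](ger0_norm y_ge0) -sqrtr_sqr.
by rewrite ler_sqrt ?lerDl ?addr_ge0 ?sqr_ge0.
Qed.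

Lemma sqrt_sqr_addr_le y r : 0 <= y -> Num.sqrt (y ^+ 2 + 4 * r ^+ 2) <= y + 2 * `|r|.
Proof.
move=> y_ge0; have yr_ge0 : 0 <= y + 2 * `|r| by rewrite addr_ge0 ?mulr_ge0.
rewrite -[X in _ <= X](ger0_norm yr_ge0) -(sqrtr_sqr (y + 2 * `|r|)) ler_sqrt ?sqr_ge0 //.
have r2 : r ^+ 2 = `|r| ^+ 2 by rewrite real_normK ?num_real.
have := normr_ge0 r; nra.
Qed.

Lemma sqrt_sqr_addr_sub_le y r : 0 < y -> Num.sqrt (y ^+ 2 + 4 * r ^+ 2) - y <= 2 * r ^+ 2 / y.
Proof.
move=> y_gt0; set w := Num.sqrt _.
have w_ge_y : y <= w by apply: sqrt_sqr_addr_ge; apply: ltW.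
have w_sqr : w ^+ 2 = y ^+ 2 + 4 * r ^+ 2 by rewrite sqr_sqrtr // addr_ge0 ?sqr_ge0.
rewrite ler_pdivlMr //; nra.
Qed.

End SqrtBounds.

Section SqrtNegligible.
Variable R : realType.
Implicit Types (u : R^nat) (K : R).

Definition o_sqrt u := (fun T => u T / Num.sqrt T%:R) @ \oo --> (0 : R).

Lemma o_sqrtMr u K : o_sqrt u -> o_sqrt (fun T => u T * K).
Proof.
move=> ou; rewrite /o_sqrt -(mul0r K).
by under eq_fun do rewrite mulrAC; exact: cvgMr_tmp.
Qed.

Lemma o_sqrtD u1 u2 : o_sqrt u1 -> o_sqrt u2 -> o_sqrt (fun T => u1 T + u2 T).
Proof.
move=> o1 o2; rewrite /o_sqrt -(addr0 0).
by under eq_fun do rewrite mulrDl; exact: cvgD.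
Qed.

Lemma o_sqrt_sum (I : finType) (u : I -> R^nat) :
  (forall i, o_sqrt (u i)) -> o_sqrt (fun T => \sum_i u i T).
Proof.
move=> ou; rewrite /o_sqrt (_ : (fun T => _) = \sum_i (fun T => u i T / Num.sqrt T%:R)).
  apply: (big_ind (fun f : R^nat => f @ \oo --> 0)) => //; first exact: cvg_cst.
  by move=> f g f0 g0; rewrite -(addr0 0); apply: cvgD.
  by move=> i _; exact: ou.
by apply: funext => T; rewrite fct_sumE mulr_suml.
Qed.

Lemma cvg0_norm_le (f g : R^nat) :
  (\forall T \near \oo, `|f T| <= g T) -> g @ \oo --> 0 -> f @ \oo --> 0.
Proof.
move=> fg /cvgr0Pnorm_le g0; apply/cvgr0Pnorm_le => e e_gt0.
apply: filterS2 fg (g0 e e_gt0) => T fT gT.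
exact: le_trans fT (le_trans (ler_norm _) gT).
Qed.

Lemma cvg_mean0 u :
  u @ \oo --> 0 -> (fun T => (\sum_(t < T) u t) / T%:R) @ \oo --> 0.
Proof.
move=> /cesaro mean0; rewrite -cvg_shiftS /=.
by under eq_fun do rewrite mulrC -(big_mkord xpredT u); exact: mean0.
Qed.

Section PartialSums.
Variables (b : R^nat) (K : R).
Hypothesis b_bound : forall t, (0 < t)%N -> 0 <= b t <= K / t%:R.

Let S T := \sum_(t < T) b t.+1.

Let S_ge0 T : 0 <= S T.
Proof. by rewrite sumr_ge0 // => t _; have /andP[] := b_bound (ltn0Sn t). Qed.

Let S_succ T : S T.+1 = S T + b T.+1.
Proof. by rewrite /S big_ord_recr. Qed.

Lemma partial_sum_mean0 : (fun T => S T / T%:R) @ \oo --> 0.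
Proof.
apply: (@cvg_mean0 (fun t => b t.+1)).
apply: (@squeeze_cvgr _ _ _ _ (cst 0) (fun t => K * harmonic t)).
- by near=> t; exact: b_bound.
- exact: cvg_cst.
- by rewrite -(mulr0 K); apply: cvgMl_tmp; exact: cvg_harmonic.
Unshelve. all: by end_near.
Qed.

(* Cesaro again: the increments S_{t+1}^2 - S_t^2 are at most 2 K S_{t+1} / (t + 1). *)
Lemma partial_sum_sqr_mean0 : (fun T => S T ^+ 2 / T%:R) @ \oo --> 0.
Proof.
have S_sqrE T : S T ^+ 2 = \sum_(t < T) (S t.+1 ^+ 2 - S t ^+ 2).
  rewrite -(big_mkord xpredT (fun t => S t.+1 ^+ 2 - S t ^+ 2)) telescope_sumr //.
  by rewrite [S 0]big_ord0 expr0n subr0.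
under eq_fun do rewrite S_sqrE; apply: (@cvg_mean0 (fun t => S t.+1 ^+ 2 - S t ^+ 2)).
apply: (@cvg0_norm_le _ (fun t => 2 * K * (S t.+1 / t.+1%:R))); last first.
  rewrite -(mulr0 (2 * K)); apply: cvgMl_tmp.
  by have := partial_sum_mean0; rewrite -cvg_shiftS.
near=> t; have /andP[b_ge0 b_le] := b_bound (ltn0Sn t).
have S_le : S t <= S t.+1 by rewrite S_succ lerDl.
have -> : S t.+1 ^+ 2 - S t ^+ 2 = b t.+1 * (S t.+1 + S t) by rewrite S_succ; ring.
rewrite ger0_norm ?mulr_ge0 ?addr_ge0 //.
have -> : 2 * K * (S t.+1 / t.+1%:R) = K / t.+1%:R * (2 * S t.+1) by ring.
by apply: ler_pM; rewrite ?addr_ge0 //; lra.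
Unshelve. all: by end_near.
Qed.

Lemma o_sqrt_partial_sum : o_sqrt (fun T => \sum_(1 <= t < T.+1) b t).
Proof.
have -> : (fun T => \sum_(1 <= t < T.+1) b t) = S.
  by apply: funext => T; rewrite big_add1 /= big_mkord.
rewrite /o_sqrt (_ : (fun T => S T / _) = Num.sqrt \o (fun T => S T ^+ 2 / T%:R)).
  rewrite -sqrtr0; apply: continuous_cvg; first exact: sqrt_continuous.
  exact: partial_sum_sqr_mean0.
apply: funext => T /=.
by rewrite sqrtrM ?sqr_ge0 // sqrtr_sqr ger0_norm // sqrtrV.
Qed.

End PartialSums.

End SqrtNegligible.

(* P, N^2 X + E and B play the roles of p, r and b from the header, N that of |v|^2. *)
Section EigenAsymptotics.
Variables (R : realType) (P E B X : R^nat) (N c : R).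
Hypotheses (N_gt0 : 0 < N) (c_gt0 : 0 < c) (X_ge : forall T, c * T%:R <= X T).
Hypotheses (oP : o_sqrt P) (oE : o_sqrt E) (oB : o_sqrt B).

Let C T := N ^+ 2 * X T + E T.
Let w T := Num.sqrt ((C T - P T) ^+ 2 + 4 * B T ^+ 2).

Let sqrt_nat_le T : Num.sqrt T%:R <= T%:R :> R.
Proof.
case: T => [|n]; first by rewrite sqrtr0.
have n1 : 1 <= n.+1%:R :> R by rewrite ler1n.
rewrite -[X in _ <= X]ger0_norm ?ler0n // -sqrtr_sqr ler_sqrt ?sqr_ge0 //; nra.
Qed.

Let sqrt_nat_gt0 [T] : (0 < T)%N -> 0 < Num.sqrt T%:R :> R.
Proof. by move=> T_gt0; rewrite sqrtr_gt0 ltr0n. Qed.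

Lemma gap_ge_eventually :
  \forall T \near \oo, (0 < T)%N /\ N ^+ 2 * c * T%:R / 2 <= C T - P T.
Proof.
have EP0 : (fun T => (E T - P T) / Num.sqrt T%:R) @ \oo --> 0.
  by rewrite -(subr0 0); under eq_fun do rewrite mulrBl; apply: cvgB.
have Nc_gt0 : 0 < N ^+ 2 * c / 2 by rewrite divr_gt0 // mulr_gt0 // exprn_gt0.
near=> T; have T_gt0 : (0 < T)%N by near: T; exists 1%N.
split => //; have s_gt0 := sqrt_nat_gt0 T_gt0.
have : `|(E T - P T) / Num.sqrt T%:R| <= N ^+ 2 * c / 2.
  by near: T; exact: cvgr0_norm_le EP0 _ Nc_gt0.
rewrite normrM normfV (gtr0_norm s_gt0) ler_pdivrMr // ler_norml => /andP[EP_ge _].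
have := sqrt_nat_le T; have := X_ge T; have N2_gt0 : 0 < N ^+ 2 by rewrite exprn_gt0.
rewrite /C; nra.
Unshelve. all: by end_near.
Qed.

Lemma lambda_min_asymptotics :
  (fun T => (P T + C T) / (2 * N) - w T / (2 * N) - P T / N) @ \oo --> 0.
Proof.
pose b T := B T / Num.sqrt T%:R.
have N3c_gt0 : 0 < N ^+ 3 * c by rewrite mulr_gt0 // exprn_gt0.
apply: (@cvg0_norm_le _ _ (fun T => 2 / (N ^+ 3 * c) * (b T * b T))); last first.
  have bb0 : (fun T => b T * b T) @ \oo --> 0 by rewrite -(mulr0 0); exact: cvgM.
  by rewrite -(mulr0 (2 / (N ^+ 3 * c))); exact: cvgMl_tmp.
near=> T; have [T_gt0 gap] : (0 < T)%N /\ N ^+ 2 * c * T%:R / 2 <= C T - P T.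
  by near: T; exact: gap_ge_eventually.
set y := C T - P T.
have y_gt0 : 0 < y by apply: lt_le_trans gap; rewrite !mulr_gt0 ?exprn_gt0 ?ltr0n.
have w_ge : y <= w T := sqrt_sqr_addr_ge (B T) (ltW y_gt0).
have w_le : w T - y <= 2 * B T ^+ 2 / y := sqrt_sqr_addr_sub_le (B T) y_gt0.
have -> : (P T + C T) / (2 * N) - w T / (2 * N) - P T / N = - ((w T - y) / (2 * N)).
  by rewrite /y; field; rewrite lt0r_neq0.
have gap_ge0 : 0 <= (w T - y) / (2 * N) by rewrite divr_ge0 ?subr_ge0 // mulr_ge0 // ltW.
rewrite normrN (ger0_norm gap_ge0).
apply: le_trans (ler_wpM2r _ w_le) _; first by rewrite invr_ge0 mulr_ge0 // ltW.
have -> : b T * b T = B T ^+ 2 / T%:R by rewrite /b -expr2 expr_div_n sqr_sqrtr ?ler0n.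
have -> : 2 * B T ^+ 2 / y / (2 * N) = B T ^+ 2 / (N * y).
  by field; rewrite !lt0r_neq0.
have -> : 2 / (N ^+ 3 * c) * (B T ^+ 2 / T%:R) = B T ^+ 2 / (N * (N ^+ 2 * c * T%:R / 2)).
  by field; rewrite !lt0r_neq0 ?ltr0n.
apply: ler_wpM2l; first exact: sqr_ge0.
rewrite lef_pV2 ?posrE ?mulr_gt0 ?divr_gt0 ?exprn_gt0 ?ltr0n //.
by rewrite ler_pM2l.
Unshelve. all: by end_near.
Qed.

Lemma lambda_max_asymptotics :
  (fun T => ((P T + C T) / (2 * N) + w T / (2 * N)) / (X T * N)) @ \oo --> (1 : R).
Proof.
apply/subr_cvg0.
pose e T := `|E T / Num.sqrt T%:R| + `|B T / Num.sqrt T%:R|.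
have N2c_gt0 : 0 < N ^+ 2 * c by rewrite mulr_gt0 // exprn_gt0.
apply: (@cvg0_norm_le _ _ (fun T => e T / (N ^+ 2 * c))); last first.
  rewrite -(mul0r (N ^+ 2 * c)^-1); apply: cvgMr_tmp.
  by rewrite -(addr0 0) -{1 2}(normr0 R); apply: cvgD; apply: cvg_norm.
near=> T; have [T_gt0 gap] : (0 < T)%N /\ N ^+ 2 * c * T%:R / 2 <= C T - P T.
  by near: T; exact: gap_ge_eventually.
set y := C T - P T.
have y_gt0 : 0 < y by apply: lt_le_trans gap; rewrite !mulr_gt0 ?exprn_gt0 ?ltr0n.
have s_gt0 := sqrt_nat_gt0 T_gt0.
have X_gt0 : 0 < X T by apply: lt_le_trans (X_ge T); rewrite mulr_gt0 ?ltr0n.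
have w_ge : y <= w T := sqrt_sqr_addr_ge (B T) (ltW y_gt0).
have w_le : w T <= y + 2 * `|B T| := sqrt_sqr_addr_le (B T) (ltW y_gt0).
have -> : ((P T + C T) / (2 * N) + w T / (2 * N)) / (X T * N) - 1 =
    (2 * E T + (w T - y)) / (2 * N ^+ 2 * X T).
  by rewrite /y /C; field; rewrite !lt0r_neq0.
have num_le : `|2 * E T + (w T - y)| <= 2 * (`|E T| + `|B T|).
  have d_ge0 : 0 <= w T - y by rewrite subr_ge0.
  have := ler_normD (2 * E T) (w T - y).
  by rewrite normrM (ger0_norm d_ge0) (ger0_norm (ler0n _ 2)); lra.
have den_gt0 : 0 < 2 * N ^+ 2 * X T by rewrite !mulr_gt0 // exprn_gt0.
rewrite normrM normfV (gtr0_norm den_gt0).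
apply: le_trans (ler_wpM2r _ num_le) _; first by rewrite invr_ge0 ltW.
have -> : 2 * (`|E T| + `|B T|) / (2 * N ^+ 2 * X T) = (`|E T| + `|B T|) / (N ^+ 2 * X T).
  by field; rewrite !lt0r_neq0 ?exprn_gt0.
have -> : e T / (N ^+ 2 * c) = (`|E T| + `|B T|) / (N ^+ 2 * (c * Num.sqrt T%:R)).
  rewrite /e !normrM !normfV (gtr0_norm s_gt0).
  by field; rewrite !lt0r_neq0 ?exprn_gt0.
apply: ler_wpM2l; first by rewrite addr_ge0.
rewrite lef_pV2 ?posrE ?mulr_gt0 ?exprn_gt0 //.
rewrite ler_pM2l ?exprn_gt0 //; apply: le_trans (X_ge T).
by rewrite ler_pM2l.
Unshelve. all: by end_near.
Qed.

End EigenAsymptotics.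

Section QuadraticGrowth.
Variable R : realType.

Lemma sqr_lower_bound_extend (g : nat -> R) m k :
  (forall t, (0 < t)%N -> 0 < g t) -> 0 < k ->
  (forall t, (m < t)%N -> k * t%:R ^+ 2 <= g t) ->
  exists2 k', 0 < k' & forall t, (0 < t)%N -> k' * t%:R ^+ 2 <= g t.
Proof.
move=> g_gt0; elim: m k => [|m IH] k k_gt0 g_ge; first by exists k.
have gm_gt0 : 0 < g m.+1 / m.+1%:R ^+ 2 by rewrite divr_gt0 ?g_gt0 ?exprn_gt0.
apply: (IH (Num.min k (g m.+1 / m.+1%:R ^+ 2))); first by rewrite lt_min k_gt0.
move=> t; rewrite leq_eqVlt => /orP[/eqP <- | lt_mt].
  by rewrite -ler_pdivlMr ?exprn_gt0 // ge_min lexx orbT.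
apply: le_trans (g_ge t lt_mt); rewrite ler_wpM2r ?sqr_ge0 //.
by rewrite ge_min lexx.
Qed.

Section Affine.
Variables (l v : 'cV[R]_2).
Hypothesis v_neq0 : v != 0.

Lemma normv_affine_sqr (t : R) : normv (l + t *: v) ^+ 2 =
  normv l ^+ 2 + 2 * t * dotv l v + t ^+ 2 * normv v ^+ 2.
Proof. by rewrite !normv_sqr !dotvE !mxE; ring. Qed.

Lemma normv_affine_sqr_le : exists2 K, 0 < K &
  forall t : nat, (0 < t)%N -> normv (l + t%:R *: v) ^+ 2 <= K * t%:R ^+ 2.
Proof.
have v2_gt0 := normv_sqr_gt0 v_neq0.
exists (normv l ^+ 2 + 2 * `|dotv l v| + normv v ^+ 2).
  by rewrite ltr_pwDr // addr_ge0 ?sqr_ge0 // mulr_ge0.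
move=> t t_gt0; rewrite normv_affine_sqr.
have t1 : 1 <= t%:R :> R by rewrite ler1n.
have l_part : 0 <= normv l ^+ 2 * (t%:R ^+ 2 - 1) by rewrite mulr_ge0 ?sqr_ge0 // subr_ge0; nra.
have lv_part : 0 <= `|dotv l v| * (t%:R ^+ 2 - t%:R) by rewrite mulr_ge0 // subr_ge0; nra.
have lv_sign : 0 <= t%:R * (`|dotv l v| - dotv l v) by rewrite mulr_ge0 ?subr_ge0 ?ler_norm; lra.
lra.
Qed.

Lemma normv_affine_sqr_ge : (forall t : nat, (0 < t)%N -> l + t%:R *: v != 0) ->
  exists2 k, 0 < k &
  forall t : nat, (0 < t)%N -> k * t%:R ^+ 2 <= normv (l + t%:R *: v) ^+ 2.
Proof.
move=> lv_neq0; have v2_gt0 := normv_sqr_gt0 v_neq0.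
set N := normv v ^+ 2; set m := Num.truncn (4 * `|dotv l v| / N).
apply: (sqr_lower_bound_extend (m := m) _ (k := N / 2)).
- by move=> t /lv_neq0 /normv_sqr_gt0.
- by rewrite divr_gt0.
move=> t lt_mt; rewrite normv_affine_sqr -/N.
have : 4 * `|dotv l v| / N < t%:R by apply: lt_le_trans (truncnS_gt _) _; rewrite ler_nat.
rewrite ltr_pdivrMr // => big_t.
have lv_part : 0 <= t%:R * (t%:R * N - 4 * `|dotv l v|) by rewrite mulr_ge0 ?subr_ge0 // ltW.
have lv_sign : 0 <= t%:R * (`|dotv l v| + dotv l v).
  by rewrite mulr_ge0 // -lerBlDr sub0r -normrN ler_norm.
have := sqr_ge0 (normv l); lra.
Qed.

End Affine.
End QuadraticGrowth.

Section PowerSums.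
Variables (R : realType) (g : nat -> R).

Lemma o_sqrt_pow_sum n k : (n <= 3)%N -> 0 < k ->
  (forall t, (0 < t)%N -> k * t%:R ^+ 2 <= g t) ->
  o_sqrt (fun T => \sum_(1 <= t < T.+1) t%:R ^+ n / g t ^+ 2).
Proof.
move=> n_le3 k_gt0 g_ge; apply: (o_sqrt_partial_sum (K := k^-2)) => t t_gt0.
have t1 : 1 <= t%:R :> R by rewrite ler1n.
have kt_gt0 : 0 < k * t%:R ^+ 2 by rewrite mulr_gt0 ?exprn_gt0 ?ltr0n.
have g_gt0 : 0 < g t := lt_le_trans kt_gt0 (g_ge t t_gt0).
rewrite divr_ge0 ?sqr_ge0 ?exprn_ge0 ?ler0n //= ler_pdivrMr ?exprn_gt0 //.
have -> : k^-2 / t%:R * g t ^+ 2 = t%:R ^+ 3 * (g t / (k * t%:R ^+ 2)) ^+ 2.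
  by field; rewrite !lt0r_neq0 ?ltr0n.
rewrite -[X in X <= _]mulr1; apply: ler_pM; rewrite ?exprn_ge0 ?ler0n //.
  by rewrite ler_weXn2l.
by rewrite exprn_ege1 // ler_pdivlMr // mul1r g_ge.
Qed.

Lemma pow4_sum_ge K : 0 < K ->
  (forall t, (0 < t)%N -> 0 < g t <= K * t%:R ^+ 2) ->
  forall T, T%:R / K ^+ 2 <= \sum_(1 <= t < T.+1) t%:R ^+ 4 / g t ^+ 2.
Proof.
move=> K_gt0 g_bound T.
apply: le_trans (_ : \sum_(1 <= t < T.+1) K ^- 2 <= _).
  by rewrite sumr_const_nat subn1 /= mulr_natl.
apply: ler_sum_nat => t /andP[t_gt0 _]; have /andP[g_gt0 g_le] := g_bound t t_gt0.
rewrite ler_pdivlMr ?exprn_gt0 //.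
have -> : t%:R ^+ 4 = K ^- 2 * (K * t%:R ^+ 2) ^+ 2 by field; rewrite lt0r_neq0.
apply: ler_wpM2l; first by rewrite invr_ge0 exprn_ge0 // ltW.
apply: lerXn2r => //; rewrite nnegrE ?ltW //.
by rewrite mulr_gt0 ?exprn_gt0 ?ltr0n.
Qed.

End PowerSums.

Section ATSpectrum.
Variables (R : realType) (Q : nat) (o : 'I_Q -> 'cV[R]_2) (x v : 'cV[R]_2).
Hypotheses (Q_gt0 : (0 < Q)%N) (v_neq0 : v != 0).
Hypothesis path_avoids : forall (t : nat) (q : 'I_Q), (1 <= t)%N -> x + t%:R *: v != o q.

Let l q := lvec x (o q).
Let s n q T := sTq x v (o q) n T.
Let N := normv v ^+ 2.

Lemma sTqE n q T :
  s n q T = \sum_(1 <= t < T.+1) t%:R ^+ n / (normv (l q + t%:R *: v) ^+ 2) ^+ 2.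
Proof. by apply: eq_bigr => t _; rewrite /dist_tq -exprM. Qed.

Lemma sTq_ge0 n q T : 0 <= s n q T.
Proof. by rewrite sumr_ge0 // => t _; rewrite divr_ge0 ?exprn_ge0 ?ler0n ?sqrtr_ge0. Qed.

Let l_off q t : (0 < t)%N -> l q + t%:R *: v != 0.
Proof. by move=> t_gt0; rewrite /l /lvec addrAC subr_eq0 path_avoids. Qed.

Lemma sTq_o_sqrt n q : (n <= 3)%N -> o_sqrt (s n q).
Proof.
move=> n_le3; have [k k_gt0 k_le] := normv_affine_sqr_ge v_neq0 (l_off q).
have -> : s n q = fun T =>
    \sum_(1 <= t < T.+1) t%:R ^+ n / (normv (l q + t%:R *: v) ^+ 2) ^+ 2.
  by apply: funext => T; rewrite sTqE.
exact: o_sqrt_pow_sum n_le3 k_gt0 k_le.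
Qed.

Lemma sum_sTq4_ge : exists2 c, 0 < c & forall T, c * T%:R <= \sum_q s 4 q T.
Proof.
pose q0 := Ordinal Q_gt0.
have [K K_gt0 K_ge] := normv_affine_sqr_le (l q0) v_neq0.
exists (K ^- 2); first by rewrite invr_gt0 exprn_gt0.
move=> T; rewrite (bigD1 q0) //=; apply: le_trans (_ : s 4 q0 T <= _).
  rewrite mulrC sTqE; apply: pow4_sum_ge => // t t_gt0.
  by rewrite K_ge // andbT normv_sqr_gt0 // l_off.
by rewrite lerDl sumr_ge0 // => q _; exact: sTq_ge0.
Qed.

Lemma AT_sym T : (AT o x v T)^T = AT o x v T.
Proof.
rewrite /AT raddf_sum; apply: eq_bigr => q _ /=; move: (lvec x (o q)) => L.
rewrite !raddfD !raddfN /= !linearZ /= !tr_scalar_mx !trmx_mul !trmxK.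
by congr (_ + _ + _); rewrite addrAC.
Qed.

Lemma qform_AT T y z : qform (AT o x v T) y z = \sum_q
  (s 2 q T * (dotv (l q) (l q) * dotv y z - dotv y (l q) * dotv (l q) z)
   + s 3 q T * (2 * dotv v (l q) * dotv y z
                - dotv y (l q) * dotv v z - dotv y v * dotv (l q) z)
   + s 4 q T * (N * dotv y z - dotv y v * dotv v z)).
Proof.
rewrite qform_sum; apply: eq_bigr => q _ /=.
by rewrite !(qformD, qformN, qformZ, qform_scalar, qform_outer).
Qed.

Lemma qform_AT_vv T :
  qform (AT o x v T) v v = \sum_q s 2 q T * dotv (l q) (perp v) ^+ 2.
Proof.
rewrite qform_AT; apply: eq_bigr => q _.
by rewrite /N normv_sqr !dotvE !mxE /=; ring.
Qed.

Lemma qform_AT_perp T : qform (AT o x v T) (perp v) (perp v) =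
  N ^+ 2 * \sum_q s 4 q T
  + \sum_q (s 2 q T * dotv (l q) v ^+ 2 + s 3 q T * (2 * N * dotv (l q) v)).
Proof.
rewrite qform_AT mulr_sumr -big_split; apply: eq_bigr => q _ /=.
by rewrite /N normv_sqr !dotvE !mxE /=; ring.
Qed.

Lemma qform_AT_mixed T : qform (AT o x v T) v (perp v) = \sum_q
  (s 2 q T * (- (dotv (l q) v * dotv (l q) (perp v)))
   + s 3 q T * (- (N * dotv (l q) (perp v)))).
Proof.
rewrite qform_AT; apply: eq_bigr => q _.
by rewrite /N normv_sqr !dotvE !mxE /=; ring.
Qed.

Let P T := \sum_q s 2 q T * dotv (l q) (perp v) ^+ 2.
Let E T := \sum_q (s 2 q T * dotv (l q) v ^+ 2 + s 3 q T * (2 * N * dotv (l q) v)).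
Let B T := \sum_q
  (s 2 q T * (- (dotv (l q) v * dotv (l q) (perp v)))
   + s 3 q T * (- (N * dotv (l q) (perp v)))).
Let X T := \sum_q s 4 q T.

Let N_gt0 : 0 < N. Proof. exact: normv_sqr_gt0. Qed.

Let o_sqrt_PEB : [/\ o_sqrt P, o_sqrt E & o_sqrt B].
Proof.
have o_s n q c : (n <= 3)%N -> o_sqrt (fun T => s n q T * c).
  by move=> n_le3; apply: o_sqrtMr; apply: sTq_o_sqrt.
split; apply: o_sqrt_sum => q; first exact: o_s.
  by apply: o_sqrtD; apply: o_s.
by apply: o_sqrtD; apply: o_s.
Qed.

Let lambda_AT T :
  lambda_min (AT o x v T) = (P T + (N ^+ 2 * X T + E T)) / (2 * N)
    - Num.sqrt ((N ^+ 2 * X T + E T - P T) ^+ 2 + 4 * B T ^+ 2) / (2 * N) /\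
  lambda_max (AT o x v T) = (P T + (N ^+ 2 * X T + E T)) / (2 * N)
    + Num.sqrt ((N ^+ 2 * X T + E T - P T) ^+ 2 + 4 * B T ^+ 2) / (2 * N).
Proof.
have [-> ->] := lambda_sym_mx2 (AT_sym T).
rewrite (mx2_mid_basis (AT_sym T) v_neq0) (mx2_rad_basis (AT_sym T) v_neq0).
by rewrite qform_AT_vv qform_AT_perp qform_AT_mixed.
Qed.

Let Pperp_sum T : \sum_q s 2 q T * normv (Pperp v *m l q) ^+ 2 = P T / N.
Proof.
by rewrite mulr_suml; apply: eq_bigr => q _; rewrite normv_Pperp_sqr // mulrA.
Qed.

Lemma lambda_min_AT_cvg :
  (fun T => lambda_min (AT o x v T) - \sum_q s 2 q T * normv (Pperp v *m l q) ^+ 2)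
    @ \oo --> 0.
Proof.
have [c c_gt0 X_ge] := sum_sTq4_ge; have [oP oE oB] := o_sqrt_PEB.
under eq_fun do rewrite Pperp_sum (lambda_AT _).1.
exact: lambda_min_asymptotics N_gt0 c_gt0 X_ge oP oE oB.
Qed.

Lemma lambda_max_AT_cvg :
  (fun T => lambda_max (AT o x v T) / (\sum_q s 4 q T * normv v ^+ 2)) @ \oo --> (1 : R).
Proof.
have [c c_gt0 X_ge] := sum_sTq4_ge; have [oP oE oB] := o_sqrt_PEB.
under eq_fun do rewrite -mulr_suml (lambda_AT _).2.
exact: lambda_max_asymptotics N_gt0 c_gt0 X_ge oP oE oB.
Qed.

End ATSpectrum.

Theorem lemma6 (R : realType) (Q : nat) (o : 'I_Q -> 'cV[R]_2)
  (x v : 'cV[R]_2) :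
  (0 < Q)%N ->
  v != 0 ->
  (forall (t : nat) (q : 'I_Q), (1 <= t)%N -> x + t%:R *: v != o q) ->
  ((fun T : nat => lambda_min (AT o x v T)
      - \sum_(q < Q) sTq x v (o q) 2 T * normv (Pperp v *m lvec x (o q)) ^+ 2)
     @ \oo --> (0:R)%R)
  /\
  ((fun T : nat => lambda_max (AT o x v T)
      / (\sum_(q < Q) sTq x v (o q) 4 T * normv v ^+ 2))
     @ \oo --> (1:R)%R).
Proof.
move=> Q_gt0 v_neq0 path_avoids.
split; [exact: lambda_min_AT_cvg Q_gt0 v_neq0 path_avoids|].
exact: lambda_max_AT_cvg Q_gt0 v_neq0 path_avoids.
Qed.
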